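(* Let $A$ be a nontrivial closed class of decision tables from $\mathcal M_2^\infty$, $\psi$ a bounded complexity measure, $n\in\omega$, $T\in A_\psi(n)$, and suppose $G(T)>0$. Then there exists a decision table $T^*\in[T]$ such that $\psi^a(T^* )\le n$ and $\psi^d(T^* )\ge G(T)-1$.
   Context: Notation: $\omega=\{0,1,2,\dots\}$; $\mathcal P(\omega)$ is the set of nonempty finite subsets of $\omega$; $E_2=\{0,1\}$. $P=\{f_i:i\in\omega\}$ is a set of attributes, $f_i\neq f_j$ for $i\ne j$. Decision tables: $\mathcal M_2^\infty$ is the set of rectangular tables filled with numbers from $E_2$, whose columns are labeled with pairwise different attributes from $P$, whose rows are pairwise different, and each row of which is labeled with a set from $\mathcal P(\omega)$ (its set of decisions). The empty table (no rows) is denoted $\Lambda$ and belongs to $\mathcal M_2^\infty$. For $T\in\mathcal M_2^\infty$: $\Pi(T)$ is the intersection of the decision sets of all rows (common decisions); $\mathrm{At}(T)$ is the set of attributes labeling columns. For nonempty $T$, $\Omega_2(T)$ is the set of finite words (including the empty word $\lambda$) over the alphabet $\{(f_i,\delta):f_i\in\mathrm{At}(T),\delta\in E_2\}$; for $\alpha=(f_{i_1},\delta_1)\cdots(f_{i_m},\delta_m)$, $T\alpha$ is the subtable of $T$ consisting of the rows having value $\delta_j$ in the column $f_{i_j}$ for all $j$, and $T\lambda=T$. Operations: for $D\subseteq\mathrm{At}(T)$, $I(D,T)$ is obtained from $T$ by deleting the columns labeled with attributes from $D$ and, in each group of rows coinciding on the remaining columns, keeping only the first row; $I(\mathrm{At}(T),T)=\Lambda$.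 For $\nu:E_2^{|\mathrm{At}(T)|}\to\mathcal P(\omega)$, $J(\nu,T)$ is obtained by replacing the decision set of each row $\bar\delta$ by $\nu(\bar\delta)$. $[T]=\{J(\nu,I(D,T)):D\subseteq\mathrm{At}(T),\ \nu:E_2^{|\mathrm{At}(T)\setminus D|}\to\mathcal P(\omega)\}$; for nonempty $A\subseteq\mathcal M_2^\infty$, $[A]=\bigcup_{T\in A}[T]$. $A$ is a closed class if $[A]=A$; nontrivial if it contains a nonempty table. Decision trees: a $2$-decision tree is a finite directed rooted tree with at least two nodes in which the root and the edges leaving the root are unlabeled, each terminal node is labeled with a decision from $\omega$, and each other node is labeled with an attribute from $P$, each edge leaving such a node being labeled with a number from $E_2$. $\mathrm{At}(\Gamma)$ is the set of attributes labeling nodes of $\Gamma$. For a complete path $\tau=v_1,d_1,\dots,v_m,d_m,v_{m+1}$ (from the root to a terminal node), $\pi(\tau)=\lambda$ if $m=1$, and otherwise $\pi(\tau)=(f_{i_2},\delta_2)\cdots(f_{i_m},\delta_m)$ where $v_j$ is labeled $f_{i_j}$ and $d_j$ is labeled $\delta_j$; $T(\tau)=T\pi(\tau)$. For $T\ne\Lambda$, a nondeterministic decision tree for $T$ is a $2$-decision tree $\Gamma$ with $\mathrm{At}(\Gamma)\subseteq\mathrm{At}(T)$ such that every row of $T$ belongs to $T(\tau)$ for some complete path $\tau$, and for every complete path $\tau$ either $T(\tau)=\Lambda$ or the decision at the terminal node of $\tau$ belongs to $\Pi(T(\tau))$. A deterministic decision tree for $T$ is a nondeterministic decision tree for $T$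 in which, additionally, exactly one edge leaves the root and the edges leaving any node that is neither the root nor terminal are labeled with pairwise different numbers. Complexity measures: a partially bounded complexity measure is a function $\psi:P^*\to\omega$ on finite words over $P$ such that for all words $\alpha_1,\alpha_2$: $\psi(\alpha_1)=0$ iff $\alpha_1=\lambda$; $\psi(\alpha_1)$ is invariant under permutation of letters; $\psi(\alpha_1)\le\psi(\alpha_1\alpha_2)$; $\psi(\alpha_1\alpha_2)\le\psi(\alpha_1)+\psi(\alpha_2)$. It is bounded if in addition $\psi(\alpha)\ge|\alpha|$ for all $\alpha$. $\psi$ is extended to words $(f_{i_1},\delta_1)\cdots(f_{i_m},\delta_m)$ by $\psi(f_{i_1}\cdots f_{i_m})$ ($\psi(\lambda)=0$). For a $2$-decision tree $\Gamma$, $\psi(\Gamma)=\max_\tau\psi(\pi(\tau))$ over complete paths. For $T\ne\Lambda$, $\psi^d(T)$ (resp. $\psi^a(T)$) is the minimum of $\psi(\Gamma)$ over deterministic (resp. nondeterministic) decision trees $\Gamma$ for $T$; $\psi^d(\Lambda)=\psi^a(\Lambda)=0$. Parameters: $m_\psi(T)=\max\{\psi(f_i):f_i\in\mathrm{At}(T)\}$, $m_\psi(\Lambda)=0$; $A_\psi(n)=\{T\in A:m_\psi(T)\le n\}$. A word $\alpha\in\Omega_2(T)$ is annihilating for $T$ if $T\alpha=\Lambda$ and $\alpha$ contains no two letters $(f_i,\delta),(f_i,\sigma)$ with $\delta\ne\sigma$; it is irreducible if no word obtained from $\alpha$ by deleting some (at least one) letters is annihilating for $T$; $G(T)$ is the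 maximum length of an irreducible annihilating word for $T$ if one exists, and $0$ otherwise; $G(\Lambda)=0$. *)

(* Decision tables, 2-decision trees and
   complexity measures over the binary alphabet E_2 = {0,1} (rendered as bool:
   0 = false, 1 = true).  Attribute f_i is represented by its index i : nat. *)
From mathcomp Require Import all_boot.
Set Implicit Arguments.
Unset Strict Implicit.
Unset Printing Implicit Defensive.

(* A set of decisions in P(omega) is represented canonically by the
   strictly increasing (hence duplicate-free) nonempty list of its elements. *)
Definition valid_dset (s : seq nat) : bool := (s != [::]) && sorted ltn s.

(* A table: column labels (attributes, in order) and rows (in order), each row
   being a 0/1 vector together with its set of decisions. *)
Record table := Table { cols : seq nat ; rows : seq (seq bool * seq nat) }.

Definition Lambda : table := Table [::] [::].

(* Membership in M_2^infty: pairwise different column attributes, rectangular,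
   pairwise different rows, decision sets in P(omega); a table without rows is
   the (unique) empty table Lambda. *)
Definition wf_table (T : table) : bool :=
  [&& uniq (cols T),
      all (fun r => size r.1 == size (cols T)) (rows T),
      uniq (map fst (rows T)),
      all (fun r => valid_dset r.2) (rows T)
    & (rows T == [::]) ==> (cols T == [::])].

(* At(T) is cols T.  Pi(T): d is a common decision of all rows. *)
Definition in_Pi (T : table) (d : nat) : bool := all (fun r => d \in r.2) (rows T).

Definition word := seq (nat * bool).

Definition in_Omega (T : table) (a : word) : bool := all (fun l => l.1 \in cols T) a.

Definition rval (T : table) (r : seq bool * seq nat) (f : nat) : bool :=
  nth false r.1 (index f (cols T)).

Definition sub (T : table) (a : word) : table :=
  Table (cols T) [seq r <- rows T | all (fun l => rval T r l.1 == l.2) a].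

Fixpoint keep_first (acc s : seq (seq bool * seq nat)) : seq (seq bool * seq nat) :=
  match s with
  | [::] => rev acc
  | x :: s' => if x.1 \in map fst acc then keep_first acc s'
               else keep_first (x :: acc) s'
  end.

Definition opI (D : seq nat) (T : table) : table :=
  if all (fun c => c \in D) (cols T) then Lambda else
  let keep := [seq j <- iota 0 (size (cols T)) | nth 0 (cols T) j \notin D] in
  let proj (r : seq bool * seq nat) := ([seq nth false r.1 j | j <- keep], r.2) in
  Table [seq c <- cols T | c \notin D] (keep_first [::] (map proj (rows T))).

Definition opJ (nu : seq bool -> seq nat) (T : table) : table :=
  Table (cols T) [seq (r.1, nu r.1) | r <- rows T].

Definition in_closure (T' T : table) : Prop :=
  exists (D : seq nat) (nu : seq bool -> seq nat),
    {subset D <= cols T} /\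
    (forall x : seq bool, size x = size [seq c <- cols T | c \notin D] ->
        valid_dset (nu x)) /\
    T' = opJ nu (opI D T).

Definition closed_class (A : table -> Prop) : Prop :=
  (forall T, A T -> wf_table T) /\
  (forall T', A T' <-> exists T, A T /\ in_closure T' T).

Definition nontrivial (A : table -> Prop) : Prop :=
  exists T, A T /\ rows T <> [::].

(* A non-root node: a terminal node labelled with a decision, or a node
   labelled with an attribute whose outgoing edges are labelled by E_2. *)
Inductive dtree := Leaf of nat | Node of nat & seq (bool * dtree).

(* A 2-decision tree: the unlabelled root with its (unlabelled) outgoing
   edges to the subtrees in the list. *)
Definition rtree := seq dtree.

Fixpoint wf_dtree (t : dtree) : bool :=
  match t with
  | Leaf _ => true
  | Node _ ch => (0 < size ch) && all (fun p => wf_dtree p.2) ch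
  end.

Definition wf_rtree (G : rtree) : bool := (0 < size G) && all wf_dtree G.

Fixpoint attrs (t : dtree) : seq nat :=
  match t with
  | Leaf _ => [::]
  | Node f ch => f :: flatten [seq attrs p.2 | p <- ch]
  end.

Definition At_tree (G : rtree) : seq nat := flatten (map attrs G).

(* complete paths from a node: (word pi, decision at the terminal node) *)
Fixpoint paths (t : dtree) : seq (word * nat) :=
  match t with
  | Leaf d => [:: ([::], d)]
  | Node f ch =>
      flatten [seq [seq ((f, p.1) :: q.1, q.2) | q <- paths p.2] | p <- ch]
  end.

Definition all_paths (G : rtree) : seq (word * nat) := flatten (map paths G).

Fixpoint det_dtree (t : dtree) : bool :=
  match t with
  | Leaf _ => true
  | Node _ ch => uniq (map fst ch) && all (fun p => det_dtree p.2) ch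
  end.

Definition det_rtree (G : rtree) : bool := (size G == 1) && all det_dtree G.

Definition ndtree_for (T : table) (G : rtree) : Prop :=
  wf_rtree G /\
  {subset At_tree G <= cols T} /\
  (forall r, r \in rows T ->
     exists2 p, p \in all_paths G & r \in rows (sub T p.1)) /\
  (forall p, p \in all_paths G ->
     rows (sub T p.1) = [::] \/ in_Pi (sub T p.1) p.2).

Definition dtree_for (T : table) (G : rtree) : Prop :=
  ndtree_for T G /\ det_rtree G.

Definition partially_bounded_measure (psi : seq nat -> nat) : Prop :=
  (forall a, psi a = 0 <-> a = [::]) /\
  (forall a b, perm_eq a b -> psi a = psi b) /\
  (forall a b, psi a <= psi (a ++ b)) /\
  (forall a b, psi (a ++ b) <= psi a + psi b).

Definition bounded_measure (psi : seq nat -> nat) : Prop :=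
  partially_bounded_measure psi /\ (forall a, size a <= psi a).

Definition psiw (psi : seq nat -> nat) (a : word) : nat := psi (map fst a).

Definition psi_tree (psi : seq nat -> nat) (G : rtree) : nat :=
  \max_(p <- all_paths G) psiw psi p.1.

Definition psi_d_is (psi : seq nat -> nat) (T : table) (m : nat) : Prop :=
  if rows T == [::] then m = 0 else
  (exists G, dtree_for T G /\ psi_tree psi G = m) /\
  (forall G, dtree_for T G -> m <= psi_tree psi G).

Definition psi_a_is (psi : seq nat -> nat) (T : table) (m : nat) : Prop :=
  if rows T == [::] then m = 0 else
  (exists G, ndtree_for T G /\ psi_tree psi G = m) /\
  (forall G, ndtree_for T G -> m <= psi_tree psi G).

Definition m_psi (psi : seq nat -> nat) (T : table) : nat :=
  \max_(f <- cols T) psi [:: f].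

Definition annihilating (T : table) (a : word) : Prop :=
  in_Omega T a /\ rows (sub T a) = [::] /\
  (forall f d s, (f, d) \in a -> (f, s) \in a -> d = s).

Definition irreducible_ann (T : table) (a : word) : Prop :=
  annihilating T a /\
  (forall b, subseq b a -> size b < size a -> ~ annihilating T b).

Definition G_is (T : table) (g : nat) : Prop :=
  if rows T == [::] then g = 0 else
  ((exists a, irreducible_ann T a /\ size a = g) /\
     (forall a, irreducible_ann T a -> size a <= g)) \/
  ((forall a, ~ irreducible_ann T a) /\ g = 0).

(* Let [a] be an irreducible annihilating word of [T] of length [g = G(T)].
   Delete all columns outside [a] and relabel each row by the set of positions
   at which it disagrees with [a]; this set is nonempty because [a] annihilates
   [T].  Testing the letters of [a] one at a time against the opposite value
   gives a nondeterministic tree all of whose paths query a single attribute,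
   so [psi^a <= m_psi(T) <= n].  By irreducibility, for each position [j] some
   row disagrees with [a] exactly at [j], and these [g] rows have pairwise
   disjoint decision sets.  A deterministic tree must separate them; along the
   path that answers every query as [a] does, each query splits off at most one
   of them, so this path has length at least [g - 1], and [psi] bounds length. *)

From mathcomp Require Import all_boot.
From Stdlib Require Import Classical.
From Stdlib Require List Wf_nat.

Set Implicit Arguments.
Unset Strict Implicit.
Unset Printing Implicit Defensive.

Lemma mem_keep_first acc s x :
  x \in keep_first acc s -> (x \in acc) || (x \in s).
Proof.
elim: s acc => [|y s IHs] acc /=; first by rewrite mem_rev => ->.
case: ifP => _ /IHs; rewrite ?in_cons; first by case/orP=> ->; rewrite ?orbT.
by case/orP=> [/orP[]|] ->; rewrite ?orbT.
Qed.

Lemma keep_first_cover acc s (y : seq bool * seq nat) :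
  (exists2 w, w \in acc & w.1 = y.1) \/ y \in s ->
  exists2 x, x \in keep_first acc s & x.1 = y.1.
Proof.
elim: s acc => [|z s IHs] acc /=.
  by case=> // -[w w_acc Ewy]; exists w; rewrite ?mem_rev.
have [/mapP[w w_acc Ezw]|_] := ifP; case=> [acc_y|]; rewrite ?in_cons.
- exact: IHs (or_introl acc_y).
- case/orP=> [/eqP Eyz|y_s]; last exact: IHs (or_intror y_s).
  by apply: IHs; left; exists w; rewrite // Eyz.
- case: acc_y => w w_acc Ewy; apply: IHs; left.
  by exists w; rewrite ?in_cons ?w_acc ?orbT.
- case/orP=> [/eqP Eyz|y_s]; last exact: IHs (or_intror y_s).
  by apply: IHs; left; exists z; rewrite ?in_cons ?eqxx ?Eyz.
Qed.

Section Projection.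
Variables (P : pred nat) (c : seq nat) (v : seq bool).
Hypothesis size_v : size v = size c.

Lemma project_zip :
  [seq nth false v j | j <- [seq j <- iota 0 (size c) | P (nth 0 c j)]] =
  [seq p.2 | p <- zip c v & P p.1].
Proof.
have -> : zip c v = [seq (nth 0 c j, nth false v j) | j <- iota 0 (size c)].
  apply: (@eq_from_nth _ (0, false)) => [|i].
    by rewrite size_zip size_map size_iota size_v minnn.
  rewrite size_zip size_v minnn => lt_ic.
  by rewrite nth_zip ?size_v // (nth_map 0) ?size_iota // nth_iota.
by rewrite filter_map -!map_comp.
Qed.

Lemma filter_zip : [seq x <- c | P x] = [seq p.1 | p <- zip c v & P p.1].
Proof. by rewrite -filter_map -/(unzip1 _) unzip1_zip // size_v. Qed.

Lemma nth_project f : f \in c -> P f ->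
  nth false [seq nth false v j | j <- [seq j <- iota 0 (size c) | P (nth 0 c j)]]
      (index f [seq x <- c | P x])
  = nth false v (index f c).
Proof.
rewrite project_zip filter_zip; elim: c v size_v => [|x c' IHc] [|b v'] //= [size_v'].
rewrite in_cons eq_sym; have [-> _ Pf|neq_xf /= f_c' Pf] := eqVneq x f.
  by rewrite Pf /= eqxx.
by case: ifP => Px /=; rewrite ?(negbTE neq_xf) /= IHc.
Qed.

Lemma size_project :
  size [seq nth false v j | j <- [seq j <- iota 0 (size c) | P (nth 0 c j)]] =
  size [seq x <- c | P x].
Proof. by rewrite project_zip filter_zip !size_map. Qed.

End Projection.

Definition rectangular (T : table) : bool :=
  all (fun r => size r.1 == size (cols T)) (rows T).

Section DeleteColumns.
Variables (D : seq nat) (T : table).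
Hypothesis T_rect : rectangular T.
Hypothesis D_proper : ~~ all (fun c => c \in D) (cols T).

Let size_row r : r \in rows T -> size r.1 = size (cols T).
Proof. by move=> r_T; apply/eqP; move/allP: T_rect; apply. Qed.

Lemma cols_opI : cols (opI D T) = [seq c <- cols T | c \notin D].
Proof. by rewrite /opI (negbTE D_proper). Qed.

Lemma opI_row_from x : x \in rows (opI D T) ->
  exists2 r, r \in rows T & size x.1 = size (cols (opI D T)) /\
    {in cols T, forall f, f \notin D -> rval (opI D T) x f = rval T r f}.
Proof.
rewrite cols_opI /rval /opI (negbTE D_proper) /= => /mem_keep_first.
rewrite in_nil /= => /mapP[r r_T ->] /=; exists r => //.
have size_r := size_row r_T; split=> [|f f_T f_D].
  exact: (size_project (fun c => c \notin D) size_r).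
exact: (nth_project (P := fun c => c \notin D) size_r f_T f_D).
Qed.

Lemma opI_row_cover r : r \in rows T ->
  exists2 x, x \in rows (opI D T) &
    {in cols T, forall f, f \notin D -> rval (opI D T) x f = rval T r f}.
Proof.
move=> r_T; rewrite /rval /opI (negbTE D_proper) /=.
set proj := fun r : seq bool * seq nat => (_, r.2).
have [x x_I Ex] := keep_first_cover (acc := [::]) (or_intror (map_f proj r_T)).
exists x => // f f_T f_D; rewrite Ex.
exact: (nth_project (P := fun c => c \notin D) (size_row r_T) f_T f_D).
Qed.

End DeleteColumns.
Lemma mem_paths_Node f ch p : p \in paths (Node f ch) ->
  exists b t, List.In (b, t) ch /\ exists2 q, q \in paths t & p = ((f, b) :: q.1, q.2).
Proof.
elim: ch => [|[b t] ch IHch] //=; rewrite mem_cat => /orP[/mapP[q q_t ->]|/IHch].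
  by exists b, t; split; [left | exists q].
by case=> b' [t' [in_ch q_t]]; exists b', t'; split; [right |].
Qed.

Lemma mem_paths_child f ch b t q : List.In (b, t) ch -> q \in paths t ->
  ((f, b) :: q.1, q.2) \in paths (Node f ch).
Proof.
elim: ch => [|[b0 t0] ch IHch] //= [[-> ->]|in_ch] q_t; rewrite mem_cat.
  by rewrite (map_f (fun q => ((f, b) :: q.1, q.2))).
by rewrite IHch ?orbT.
Qed.

Fixpoint dsize (t : dtree) : nat :=
  if t is Node _ ch then sumn [seq (dsize p.2).+1 | p <- ch] else 0.

Lemma dsize_child f ch b t : List.In (b, t) ch -> dsize t < dsize (Node f ch).
Proof.
elim: ch => [|[b0 t0] ch IHch] //= [[_ ->]|/IHch]; first by rewrite ltnS leq_addr.
by move/leq_trans; apply; rewrite leq_addl.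
Qed.

Lemma child_label_mem (ch : seq (bool * dtree)) b t :
  List.In (b, t) ch -> b \in map fst ch.
Proof.
elim: ch => [|[b0 t0] ch IHch] //= [[-> _]|/IHch]; rewrite in_cons ?eqxx //.
by move=> ->; rewrite orbT.
Qed.

Lemma det_child_unique (ch : seq (bool * dtree)) b t1 t2 : uniq (map fst ch) ->
  List.In (b, t1) ch -> List.In (b, t2) ch -> t1 = t2.
Proof.
elim: ch => [|[b0 t0] ch IHch] //= /andP[b0_ch u_ch].
case=> [E1|in1]; case=> [E2|in2].
- by move: E1 E2 => [_ <-] [_ <-].
- by move: E1 b0_ch => [-> _] /negP[]; apply: child_label_mem in2.
- by move: E2 b0_ch => [-> _] /negP[]; apply: child_label_mem in1.
- exact: IHch.
Qed.

Lemma det_child (ch : seq (bool * dtree)) b t :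
  all (fun p => det_dtree p.2) ch -> List.In (b, t) ch -> det_dtree t.
Proof. by elim: ch => [|[b0 t0] ch IHch] //= /andP[det_t0 det_ch] [[_ <-]|/IHch]; auto. Qed.

Section DeterministicDepth.
Variables (I : eqType) (rv : I -> nat -> bool) (beta : nat -> bool).

Definition agrees (x : I) (w : word) : bool := all (fun l => rv x l.1 == l.2) w.

Lemma det_dtree_deep_path t (J : seq I) :
  det_dtree t -> uniq J -> J != [::] ->
  (forall x, x \in J -> exists2 p, p \in paths t & agrees x p.1) ->
  (forall p x y, p \in paths t -> x \in J -> y \in J ->
     agrees x p.1 -> agrees y p.1 -> x = y) ->
  (forall f, count (fun x => rv x f != beta f) J <= 1) ->
  exists2 p, p \in paths t & (size J).-1 <= size p.1.
Proof.
move: {2}(dsize t).+1 (ltnSn (dsize t)) => N.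
elim: N t J => // N IHN [d|f ch] J lt_tN det_t uJ J0 cover separate few.
  have /hasP[x x_J _] : has predT J by rewrite has_predT lt0n size_eq0.
  exists ([::], d); rewrite ?inE //= leqn0 -subn1 subn_eq0.
  apply: (@uniq_leq_size _ _ [:: x]) => // y y_J; rewrite inE.
  by apply/eqP/(separate ([::], d)); rewrite ?inE.
move: det_t => /= /andP[u_ch det_ch].
(* All but at most one [x] answer the query [f] as [beta] does. *)
set J' := [seq x <- J | rv x f == beta f].
have size_J : size J <= (size J').+1.
  rewrite size_filter -(count_predC (fun x => rv x f == beta f) J) -addn1 leq_add2l.
  by apply: leq_trans (few f); apply: sub_count.
case E: J' => [|x0 J'0].
  have /hasP[x x_J _] : has predT J by rewrite has_predT lt0n size_eq0.
  have [p p_t _] := cover x x_J.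
  by exists p => //; rewrite -subn1 leq_subLR (leq_trans size_J) // E leq_addr.
have: x0 \in J' by rewrite E mem_head.
rewrite mem_filter => /andP[/eqP rv_x0 /cover[p0 /mem_paths_Node[b [t [in_ch [q0 _ ->]]]]]].
rewrite /agrees /= rv_x0 => /andP[/eqP beta_b _].
have [||||x|q x y q_t||q q_t size_q] := IHN t J'.
- by apply: leq_trans (dsize_child f in_ch) _.
- exact: det_child det_ch in_ch.
- exact: filter_uniq.
- by rewrite E.
- rewrite mem_filter => /andP[/eqP rv_x /cover[p]].
  case/mem_paths_Node=> b1 [t1 [in1 [q q_t ->]]].
  rewrite /agrees /= rv_x => /andP[/eqP beta_b1 agree_q].
  by rewrite -beta_b1 beta_b in in1; rewrite (det_child_unique u_ch in_ch in1); exists q.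
- rewrite !mem_filter => /andP[/eqP rv_x x_J] /andP[/eqP rv_y y_J] agree_x agree_y.
  apply: (separate ((f, b) :: q.1, q.2)) => //; first exact: mem_paths_child in_ch q_t.
    by rewrite /agrees /= rv_x beta_b eqxx.
  by rewrite /agrees /= rv_y beta_b eqxx.
- by move=> f'; rewrite count_filter (leq_trans _ (few f')) // sub_count // => x /andP[].
exists ((f, b) :: q.1, q.2); first exact: mem_paths_child in_ch q_t.
rewrite /= -subn1 leq_subLR add1n (leq_trans size_J) //.
by move: size_q; rewrite E.
Qed.

End DeterministicDepth.

Definition letter_attr (a : word) i : nat := (nth (0, false) a i).1.
Definition letter_bit (a : word) i : bool := (nth (0, false) a i).2.

Lemma annihilated_row_mismatch T a r : rows (sub T a) = [::] -> r \in rows T ->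
  exists2 i, i < size a & rval T r (letter_attr a i) != letter_bit a i.
Proof.
move=> ann r_T; have : r \notin rows (sub T a) by rewrite ann.
rewrite mem_filter r_T andbT -has_predC => /hasP[l l_a mismatch].
by exists (index l a); rewrite ?index_mem // /letter_attr /letter_bit nth_index.
Qed.

Lemma irreducible_ann_witness T a j : irreducible_ann T a -> j < size a ->
  exists2 r, r \in rows T & forall i, i < size a ->
    (rval T r (letter_attr a i) != letter_bit a i) = (i == j).
Proof.
move=> [[a_Om [ann consistent]] minimal] lt_ja.
(* [b] is [a] without its [j]-th letter; by minimality some row satisfies it. *)
set b := [seq nth (0, false) a i | i <- iota 0 (size a) & i != j].
have sub_ba : subseq b a.
  apply: subseq_trans (map_subseq _ (filter_subseq _ _)) _.
  by rewrite -/(mkseq _ _) mkseq_nth.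
have lt_ba : size b < size a.
  rewrite size_map size_filter -{2}(size_iota 0 (size a)) -count_predT.
  rewrite -(count_predC (fun i => i != j)) -{1}(addn0 (count _ _)) ltn_add2l.
  by rewrite -has_count; apply/hasP; exists j; rewrite ?mem_iota //= eqxx.
have [r r_T agree_b] : exists2 r, r \in rows T & r \in rows (sub T b).
  case E: (rows (sub T b)) => [|r s].
    case: (minimal b sub_ba lt_ba); split; last split=> //.
      by apply/allP => l /(mem_subseq sub_ba); move/allP: a_Om; apply.
    by move=> f d s' /(mem_subseq sub_ba) l1 /(mem_subseq sub_ba); apply: consistent.
  by exists r; [move: (mem_head r s); rewrite -E mem_filter => /andP[] | exact: mem_head].
move: agree_b; rewrite mem_filter r_T andbT => /allP agree_b.
have agree_i i : i < size a -> i != j -> rval T r (letter_attr a i) = letter_bit a i.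
  move=> lt_ia ne_ij; apply/eqP/(agree_b (nth (0, false) a i))/map_f.
  by rewrite mem_filter ne_ij mem_iota.
exists r => // i lt_ia; have [->|ne_ij] := eqVneq i j; last by rewrite agree_i ?eqxx.
apply/negP => /eqP agree_j.
have : r \in rows (sub T a); last by rewrite ann.
rewrite mem_filter r_T andbT; apply/allP => l l_a.
rewrite -(nth_index (0, false) l_a); have lt_la : index l a < size a by rewrite index_mem.
rewrite -/(letter_attr a _) -/(letter_bit a _).
by have [->|ne] := eqVneq (index l a) j; rewrite ?agree_j ?agree_i.
Qed.

Lemma G_is_witness T g : G_is T g -> 0 < g ->
  rows T != [::] /\ exists2 a, irreducible_ann T a & size a = g.
Proof.
rewrite /G_is; case: (rows T == [::]) => [-> //|] [[[a a_irr _]]|[_ ->]] //.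
by split=> //; exists a; case: a_irr.
Qed.

Definition fan (a : word) : rtree :=
  [seq Node (letter_attr a i) [:: (~~ letter_bit a i, Leaf i)] | i <- iota 0 (size a)].

Lemma all_paths_fan a : all_paths (fan a) =
  [seq ([:: (letter_attr a i, ~~ letter_bit a i)], i) | i <- iota 0 (size a)].
Proof. by rewrite /fan /all_paths /At_tree; elim: (iota 0 (size a)) => //= i s ->. Qed.

Lemma At_tree_fan a : At_tree (fan a) = [seq letter_attr a i | i <- iota 0 (size a)].
Proof. by rewrite /fan /all_paths /At_tree; elim: (iota 0 (size a)) => //= i s ->. Qed.

Lemma psi_tree_fan psi T a : in_Omega T a -> psi_tree psi (fan a) <= m_psi psi T.
Proof.
move=> /allP a_Om; apply/bigmax_leqP_seq => p; rewrite all_paths_fan.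
case/mapP=> i; rewrite mem_iota => /andP[_ lt_ia] -> _.
by apply: leq_bigmax_seq => //; apply: (a_Om (nth (0, false) a i)); rewrite mem_nth.
Qed.

(* Tests the letters of [a] in turn: a first mismatch at position [i] ends in
   the leaf [k + i]; the full match ends in the arbitrary leaf [0]. *)
Fixpoint chain (a : word) (k : nat) : dtree :=
  if a is (f, b) :: a' then Node f [:: (~~ b, Leaf k); (b, chain a' k.+1)]
  else Leaf 0.

Lemma wf_chain a k : wf_dtree (chain a k).
Proof. by elim: a k => [|[f b] a IHa] k //=; rewrite IHa. Qed.

Lemma det_chain a k : det_dtree (chain a k).
Proof. by elim: a k => [|[f b] a IHa] k //=; rewrite IHa; case: b. Qed.

Lemma attrs_chain a k : {subset attrs (chain a k) <= map fst a}.
Proof.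
elim: a k => [|[f b] a IHa] k f' //=; rewrite !in_cons cats0.
by case/orP=> [->|/IHa ->]; rewrite ?orbT.
Qed.

Lemma chain_cover a k (rv : nat -> bool) :
  exists2 p, p \in paths (chain a k) & all (fun l => rv l.1 == l.2) p.1.
Proof.
elim: a k => [|[f b] a IHa] k /=; first by exists ([::], 0); rewrite ?inE.
have [rv_f|neq_f] := eqVneq (rv f) b.
  have [q q_a agree_q] := IHa k.+1; exists ((f, b) :: q.1, q.2).
    by rewrite cats0 in_cons (map_f (fun q => ((f, b) :: q.1, q.2))) ?orbT.
  by rewrite /= rv_f eqxx.
exists ([:: (f, ~~ b)], k); rewrite ?mem_head //= andbT.
by move: neq_f; case: (rv f); case: b.
Qed.

Lemma paths_chain a k p : p \in paths (chain a k) ->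
  p = (a, 0) \/ exists2 i, i < size a &
    (letter_attr a i, ~~ letter_bit a i) \in p.1 /\ p.2 = k + i.
Proof.
elim: a k p => [|[f b] a IHa] k p /=; first by rewrite inE => /eqP->; left.
rewrite cats0 in_cons => /orP[/eqP->|/mapP[q /IHa[->|[i lt_ia [q_i ->]]] ->]].
- by right; exists 0; rewrite //= mem_head addn0.
- by left.
by right; exists i.+1; rewrite //= in_cons q_i orbT addSnnS.
Qed.

Lemma ex_least_nat (P : nat -> Prop) k : P k ->
  exists2 m, P m & forall j, P j -> m <= j.
Proof.
move=> Pk.
have [m [[Pm m_least] _]] := Wf_nat.dec_inh_nat_subset_has_unique_least_element
  P (fun n => classic (P n)) (ex_intro _ k Pk).
by exists m => // j /m_least /leP.
Qed.

Lemma psi_a_exists psi T G : ndtree_for T G ->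
  exists2 x, psi_a_is psi T x & x <= psi_tree psi G.
Proof.
rewrite /psi_a_is; case: (rows T == [::]) => G_T; first by exists 0.
have [x [G0 [G0_T <-]] x_least] :=
  @ex_least_nat (fun x => exists G, ndtree_for T G /\ psi_tree psi G = x)
               _ (ex_intro _ G (conj G_T erefl)).
exists (psi_tree psi G0); last by apply: x_least; exists G.
by split=> [|G1 G1_T]; [exists G0 | apply: x_least; exists G1].
Qed.

Lemma psi_d_exists psi T G : dtree_for T G -> exists d, psi_d_is psi T d.
Proof.
rewrite /psi_d_is; case: (rows T == [::]) => G_T; first by exists 0.
have [d [G0 [G0_T <-]] d_least] :=
  @ex_least_nat (fun d => exists G, dtree_for T G /\ psi_tree psi G = d)
               _ (ex_intro _ G (conj G_T erefl)).
by exists (psi_tree psi G0); split=> [|G1 G1_T]; [exists G0 | apply: d_least; exists G1].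
Qed.

Lemma psi_tree_ge_path psi G p : (forall w, size w <= psi w) ->
  p \in all_paths G -> size p.1 <= psi_tree psi G.
Proof.
move=> size_psi p_G; rewrite -(size_map fst) (leq_trans (size_psi _)) //.
exact: (@leq_bigmax_seq _ _ _ (fun q => psiw psi q.1) p p_G).
Qed.

Lemma psi_d_is_lower psi T d k : rows T != [::] -> psi_d_is psi T d ->
  (forall G, dtree_for T G -> k <= psi_tree psi G) -> k <= d.
Proof. by rewrite /psi_d_is => /negbTE-> [[G [G_T <-]] _] /(_ G G_T). Qed.

Section Reduct.
Variables (T : table) (a : word).

Definition outside_cols : seq nat := [seq c <- cols T | c \notin map fst a].

(* [rval] only reads the 0/1 part of a row, so [(x, [::])] stands for any row
   with values [x]. *)
Definition mismatches (x : seq bool) : seq nat :=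
  [seq i <- iota 0 (size a) |
     rval (opI outside_cols T) (x, [::]) (letter_attr a i) != letter_bit a i].

(* The default [[:: 0]] only keeps decision sets valid: since [a] annihilates
   [T], every row of the reduct has a mismatch. *)
Definition mismatch_dset (x : seq bool) : seq nat :=
  if mismatches x is [::] then [:: 0] else mismatches x.

Definition reduct : table := opJ mismatch_dset (opI outside_cols T).

Hypothesis T_rect : rectangular T.
Hypothesis a_ann : annihilating T a.
Hypothesis a_nil : 0 < size a.

Local Notation m := (size a).
Local Notation attr := (letter_attr a).
Local Notation bit := (letter_bit a).

Lemma letter_attr_kept i : i < m -> attr i \in cols T /\ attr i \notin outside_cols.
Proof.
have [/allP a_Om _] := a_ann => lt_im.
have l_a := mem_nth (0, false) lt_im.
by split; [apply: (a_Om _ l_a) | rewrite mem_filter (map_f fst l_a)].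
Qed.

Lemma outside_proper : ~~ all (fun c => c \in outside_cols) (cols T).
Proof.
have [attr_T attr_out] := letter_attr_kept a_nil.
by apply/allPn; exists (attr 0).
Qed.

Lemma mem_cols_reduct f : (f \in cols reduct) = (f \in map fst a).
Proof.
rewrite /reduct /opJ /= (cols_opI outside_proper) !mem_filter.
case f_a: (f \in map fst a) => /=; last by rewrite andNb.
by case/mapP: f_a => l /(allP a_ann.1) l_T ->.
Qed.

Lemma reduct_closure : in_closure reduct T.
Proof.
exists outside_cols, mismatch_dset; split=> [c|]; first by rewrite mem_filter => /andP[].
split=> // x _.
have : sorted ltn (mismatches x) := sorted_filter ltn_trans _ (iota_ltn_sorted 0 m).
by rewrite /mismatch_dset; case: (mismatches x).
Qed.

Lemma reduct_row_from r' : r' \in rows reduct ->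
  exists2 r, r \in rows T & [/\ r'.2 = mismatch_dset r'.1,
    size r'.1 = size (cols reduct) &
    forall i, i < m -> rval reduct r' (attr i) = rval T r (attr i)].
Proof.
case/mapP=> x /(opI_row_from T_rect outside_proper)[r r_T [size_x agree]] ->.
exists r => //; split=> // i /letter_attr_kept[attr_T attr_out].
exact: agree.
Qed.

Lemma reduct_row_cover r : r \in rows T ->
  exists2 r', r' \in rows reduct &
    forall i, i < m -> rval reduct r' (attr i) = rval T r (attr i).
Proof.
case/(opI_row_cover T_rect outside_proper)=> x x_I agree.
exists (x.1, mismatch_dset x.1); first exact: (map_f (fun x => (x.1, mismatch_dset x.1))).
by move=> i /letter_attr_kept[attr_T attr_out]; apply: agree.
Qed.

Lemma reduct_dsetE r' i : r' \in rows reduct ->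
  (i \in r'.2) = (i < m) && (rval reduct r' (attr i) != bit i).
Proof.
have [_ [ann _]] := a_ann.
move=> /[dup] r'_red /reduct_row_from[r r_T [-> _ agree]].
have mem_mis j : (j \in mismatches r'.1) = (j < m) && (rval reduct r' (attr j) != bit j).
  by rewrite mem_filter mem_iota andbC.
rewrite /mismatch_dset -mem_mis; case E: (mismatches r'.1) => //.
have [j lt_jm mis_j] := annihilated_row_mismatch ann r_T.
by move: (mem_mis j); rewrite E lt_jm agree // mis_j.
Qed.

Lemma reduct_rows_nonempty : rows T != [::] -> rows reduct != [::].
Proof.
case E: (rows T) => [|r s] // _.
have r_T : r \in rows T by rewrite E mem_head.
have [r' r'_red _] := reduct_row_cover r_T.
by apply: contraTneq r'_red => ->.
Qed.

Lemma reduct_mismatch r' : r' \in rows reduct ->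
  exists2 i, i < m & rval reduct r' (attr i) != bit i.
Proof.
have [_ [ann _]] := a_ann.
case/reduct_row_from=> r r_T [_ _ agree].
by have [i lt_im] := annihilated_row_mismatch ann r_T; exists i; rewrite ?agree.
Qed.

Lemma fan_ndtree : ndtree_for reduct (fan a).
Proof.
split; first by rewrite /wf_rtree size_map size_iota a_nil all_map; apply/allP.
split.
  move=> f; rewrite At_tree_fan => /mapP[i]; rewrite mem_iota => /andP[_ lt_im] ->.
  by rewrite mem_cols_reduct (map_f fst) // mem_nth.
rewrite all_paths_fan; split.
  move=> r' r'_red; have [i lt_im mis_i] := reduct_mismatch r'_red.
  exists ([:: (attr i, ~~ bit i)], i).
    by rewrite (map_f (fun i => ([:: (attr i, ~~ bit i)], i))) // mem_iota.
  by rewrite mem_filter r'_red /= andbT; move: mis_i; case: (rval _ _ _); case: (bit i).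
move=> p /mapP[i]; rewrite mem_iota => /andP[_ lt_im] -> /=; right.
apply/allP => r'; rewrite mem_filter /= andbT => /andP[mis_i r'_red].
by rewrite (reduct_dsetE _ r'_red) lt_im; move: mis_i; case: (rval _ _ _); case: (bit i).
Qed.

Lemma chain_dtree_for : dtree_for reduct [:: chain a 0].
Proof.
split; last by rewrite /det_rtree /= det_chain.
split; first by rewrite /wf_rtree /= wf_chain.
rewrite /all_paths /At_tree /= !cats0; split.
  by move=> f /attrs_chain; rewrite mem_cols_reduct.
split.
  move=> r' r'_red; have [p p_chain agree] := chain_cover a 0 (rval reduct r').
  by exists p; rewrite // mem_filter agree.
move=> p /paths_chain[->|[i lt_im [mis_i ->]]].
  left; case E: (rows (sub reduct a)) => [//|r' s].
  have : r' \in rows (sub reduct a) by rewrite E mem_head.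
  rewrite mem_filter => /andP[/allP agree /reduct_mismatch[i lt_im]].
  by rewrite (eqP (agree _ (mem_nth (0, false) lt_im))) eqxx.
right; apply/allP => r'; rewrite mem_filter => /andP[/allP agree r'_red].
rewrite (reduct_dsetE _ r'_red) lt_im /=.
by rewrite (eqP (agree _ mis_i)); case: (bit i).
Qed.

Lemma reduct_singleton_rows : irreducible_ann T a ->
  exists pick : nat -> seq bool * seq nat, forall j, j < m ->
    pick j \in rows reduct /\
    forall i, i < m -> (rval reduct (pick j) (attr i) != bit i) = (i == j).
Proof.
move=> a_irr.
pose single j r' :=
  all (fun i => (rval reduct r' (attr i) != bit i) == (i == j)) (iota 0 m).
exists (fun j => nth ([::], [::]) (rows reduct) (find (single j) (rows reduct))) => j lt_jm.
have has_single : has (single j) (rows reduct).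
  have [r r_T r_j] := irreducible_ann_witness a_irr lt_jm.
  have [r' r'_red agree] := reduct_row_cover r_T.
  apply/hasP; exists r' => //; apply/allP => i; rewrite mem_iota => /andP[_ lt_im].
  by rewrite agree // r_j.
split; first by rewrite mem_nth // -has_find.
move/allP: (nth_find ([::], [::]) has_single) => single_j i lt_im.
by have := single_j i; rewrite mem_iota lt_im => /(_ isT) /eqP.
Qed.

Lemma reduct_dtree_deep_path G : irreducible_ann T a -> dtree_for reduct G ->
  exists2 p, p \in all_paths G & m.-1 <= size p.1.
Proof.
move=> /reduct_singleton_rows[pick pick_spec] [[_ [_ [cover correct]]]].
case: G cover correct => [|t [|]] //; rewrite /all_paths /= cats0 => cover correct.
rewrite /det_rtree /= andbT => det_t.
pose beta f := letter_bit a (index f (map fst a)).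
have [|j|p j1 j2 p_t|f|p p_t] :=
  @det_dtree_deep_path _ (fun j => rval reduct (pick j)) beta t (iota 0 m)
    det_t (iota_uniq 0 m).
- by rewrite -size_eq0 size_iota -lt0n.
- rewrite mem_iota => /andP[_ /pick_spec[/cover[p p_t]]].
  by rewrite mem_filter => /andP[agree _] _; exists p.
- rewrite !mem_iota => /andP[_ /pick_spec[pick1 spec1]] /andP[_ /pick_spec[pick2 spec2]].
  move=> agree1 agree2.
  have in1 : pick j1 \in rows (sub reduct p.1).
    by rewrite mem_filter pick1 andbT; exact: agree1.
  have in2 : pick j2 \in rows (sub reduct p.1).
    by rewrite mem_filter pick2 andbT; exact: agree2.
  have [E|/allP common] := correct p p_t; first by move: in1; rewrite /sub /= E.
  have := common _ in1; have := common _ in2.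
  rewrite (reduct_dsetE _ pick1) (reduct_dsetE _ pick2) => /andP[lt_dm].
  by rewrite spec1 ?spec2 // => /eqP <- /andP[_ /eqP].
- have [f_a|f_a] := boolP (f \in map fst a).
    have lt_fm : index f (map fst a) < m by rewrite -(size_map fst) index_mem.
    have attr_f : attr (index f (map fst a)) = f.
      by rewrite /letter_attr -(nth_map _ 0) // nth_index.
    rewrite (@eq_in_count _ _ (pred1 (index f (map fst a)))).
      by rewrite count_uniq_mem ?iota_uniq ?leq_b1.
    move=> j; rewrite mem_iota => /andP[_ /pick_spec[_ spec]] /=.
    by rewrite -{1}attr_f spec // eq_sym.
  rewrite (@eq_in_count _ _ pred0) ?count_pred0 // => j; rewrite mem_iota.
  case/andP=> _ /pick_spec[/reduct_row_from[r _ [_ size_pick _]] _] /=.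
  have f_red : f \notin cols reduct by rewrite mem_cols_reduct.
  rewrite /beta /rval (memNindex f_red) nth_default ?size_pick //.
  by rewrite /letter_bit (memNindex f_a) nth_default ?size_map.
- by rewrite size_iota; exists p.
Qed.

End Reduct.

Theorem lemma13 (A : table -> Prop) (psi : seq nat -> nat) (n : nat)
    (T : table) (g : nat) :
  closed_class A -> nontrivial A -> bounded_measure psi ->
  A T -> m_psi psi T <= n ->
  G_is T g -> 0 < g ->
  exists Ts : table, in_closure Ts T /\
    exists a d : nat,
      psi_a_is psi Ts a /\ a <= n /\ psi_d_is psi Ts d /\ g - 1 <= d.
Proof.
move=> [wf_A _] _ [_ size_psi] A_T m_T G_T g_pos.
have [rows_T [a a_irr size_a]] := G_is_witness G_T g_pos.
have /and5P[_ T_rect _ _ _] := wf_A T A_T.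
have a_ann := a_irr.1; have a_nil : 0 < size a by rewrite size_a.
exists (reduct T a); split; first exact: reduct_closure.
have [x psi_a_x le_x] := psi_a_exists psi (fan_ndtree T_rect a_ann a_nil).
have [d psi_d_d] := psi_d_exists psi (chain_dtree_for T_rect a_ann a_nil).
exists x, d; do !split=> //.
  exact: leq_trans le_x (leq_trans (psi_tree_fan psi a_ann.1) m_T).
apply: psi_d_is_lower psi_d_d _ => [|G G_red]; first exact: reduct_rows_nonempty rows_T.
have [p p_G size_p] := reduct_dtree_deep_path T_rect a_ann a_nil a_irr G_red.
by rewrite -size_a subn1 (leq_trans size_p) // psi_tree_ge_path.
Qed.
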